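(* Let $M$ be a real $n\times n$ matrix, $n\ge2$. If $M^{[2]}$ is a $P_0$-matrix, then no nonreal eigenvalue of $M$ lies in the open left half-plane $\mathbb{C}_-$. If $-M^{[2]}$ is a $P_0$-matrix, then no nonreal eigenvalue of $M$ lies in the open right half-plane $\mathbb{C}_+$.
   Context: A square real matrix is a $P_0$-matrix if all its principal minors are nonnegative. For $M\in\mathbb{R}^{n\times n}$, $M^{[2]}$ is the second additive compound: the matrix of $u\wedge v\mapsto Mu\wedge v+u\wedge Mv$ on $\Lambda^2\mathbb{R}^n$ with respect to the basis $e_i\wedge e_j$ ($i<j$) in lexicographic order. *)

From HB Require Import structures.
From mathcomp Require Import all_boot all_order all_algebra.
From mathcomp Require Import complex.
Set Implicit Arguments. Unset Strict Implicit. Unset Printing Implicit Defensive.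
Import Order.TTheory GRing.Theory Num.Theory.
Local Open Scope ring_scope.

(* Index pairs (i, j), i < j, of the basis e_i /\ e_j of Lambda^2 R^n,
   listed in lexicographic order (enum 'I_n is increasing). *)
Definition wedge_pairs (n : nat) : seq ('I_n * 'I_n) :=
  [seq p : 'I_n * 'I_n <- [seq (i, j) | i <- enum 'I_n, j <- enum 'I_n] | (p.1 < p.2)%N].

Definition wedge_dim (n : nat) : nat := size (wedge_pairs n).

Definition wedge_idx (n : nat) (a : 'I_(wedge_dim n)) : 'I_n * 'I_n :=
  tnth (in_tuple (wedge_pairs n)) a.

(* Second additive compound M^[2]: the matrix of u/\v |-> Mu/\v + u/\Mv in the
   basis e_i/\e_j (i<j, lexicographic).  Expanding
   M^[2](e_k/\e_l) = sum_r M_rk e_r/\e_l + sum_r M_rl e_k/\e_r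
   on the basis (using e_l/\e_r = - e_r/\e_l, e_r/\e_r = 0), the coefficient of
   e_i/\e_j is  [l=j] M_ik - [l=i] M_jk + [k=i] M_jl - [k=j] M_il. *)
Definition compound2 {R : pzRingType} (n : nat) (M : 'M[R]_n)
  : 'M[R]_(wedge_dim n) :=
  \matrix_(a, b)
    let: (i, j) := wedge_idx a in
    let: (k, l) := wedge_idx b in
      (if l == j then M i k else 0) - (if l == i then M j k else 0)
    + (if k == i then M j l else 0) - (if k == j then M i l else 0).

Definition P0_matrix {R : numDomainType} (m : nat) (A : 'M[R]_m) : Prop :=
  forall S : {set 'I_m},
    0 <= \det (mxsub (@enum_val _ (mem S)) (@enum_val _ (mem S)) A).

Definition complex_eigenvalue {R : rcfType} (n : nat) (M : 'M[R]_n)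
  (z : R[i]) : bool :=
  eigenvalue (map_mx (real_complex R) M) z.

From HB Require Import structures.
From mathcomp Require Import all_boot all_order all_algebra all_fingroup.
From mathcomp Require Import complex ring lra.
Import Order.TTheory GRing.Theory Num.Theory.
Set Implicit Arguments. Unset Strict Implicit. Unset Printing Implicit Defensive.
Local Open Scope ring_scope.

(* If z is a nonreal eigenvalue of M with eigenvector v, then conj z is one with
   eigenvector conj v, and since z <> conj z the wedge v /\ conj v is nonzero;
   it is an eigenvector of M^[2] for z + conj z = 2 Re z, a real eigenvalue.
   A P_0-matrix A satisfies det (A + D) > 0 for every positive diagonal D
   (expand the determinant along one diagonal entry at a time), so it has no
   negative real eigenvalue; hence 2 Re z >= 0, and symmetrically for -M^[2]. *)

Lemma det_mxsub_perm (R : comPzRingType) k (s : 'S_k) (B : 'M[R]_k) :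
  \det (mxsub s s B) = \det B.
Proof.
have -> : mxsub s s B = perm_mx s *m B *m perm_mx s^-1.
  by rewrite -row_permE -col_permE; apply/matrixP => i j; rewrite !mxE.
by rewrite !det_mulmx mulrC mulrA -det_mulmx -perm_mxM mulVg perm_mx1 det1 mul1r.
Qed.

Lemma det_mxsub_inj (R : comPzRingType) k k' (g : 'I_k -> 'I_k') (B : 'M[R]_k') :
  k = k' -> injective g -> \det (mxsub g g B) = \det B.
Proof.
move=> ek; subst k' => g_inj.
rewrite -(det_mxsub_perm (perm g_inj) B); congr (\det _).
by apply/matrixP => i j; rewrite !mxE !permE.
Qed.

Section PrincipalMinors.
Variable R : numFieldType.

(* Principal minors indexed by injections rather than by subsets: this class
   is visibly closed under passing to principal submatrices. *)
Definition P0_inj m (A : 'M[R]_m) :=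
  forall k (f : 'I_k -> 'I_m), injective f -> 0 <= \det (mxsub f f A).

Lemma P0_matrix_inj m (A : 'M[R]_m) : P0_matrix A -> P0_inj A.
Proof.
move=> P0A k f f_inj.
pose S := [set f x | x in 'I_k].
have fS x : f x \in S by apply: imset_f.
pose g x : 'I_#|S| := enum_rank_in (fS x) (f x).
have gE x : enum_val (g x) = f x by rewrite /g enum_rankK_in.
have -> : mxsub f f A = mxsub g g (mxsub (@enum_val _ (mem S)) (@enum_val _ (mem S)) A).
  by apply/matrixP => i j; rewrite !mxE !gE.
rewrite det_mxsub_inj; first exact: P0A.
  by rewrite card_imset // cardT size_enum_ord.
by move=> x y /(congr1 enum_val); rewrite !gE => /f_inj.
Qed.

Lemma P0_inj_det_ge0 m (A : 'M[R]_m) : P0_inj A -> 0 <= \det A.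
Proof. by move=> P0A; rewrite -[A]mxsub_id; apply: P0A. Qed.

Lemma P0_inj_minor m (A : 'M[R]_m.+1) i : P0_inj A -> P0_inj (row' i (col' i A)).
Proof.
move=> P0A k f f_inj.
have -> : mxsub f f (row' i (col' i A)) = mxsub (lift i \o f) (lift i \o f) A.
  by apply/matrixP => r c; rewrite !mxE.
by apply: P0A => x y /= /lift_inj /f_inj.
Qed.

(* Linearity of the determinant in row i, which is the only row carrying d_i. *)
Lemma det_add_diag_expand m (A : 'M[R]_m.+1) (d : 'rV[R]_m.+1) i :
  \det (A + diag_mx d) =
    \det (A + diag_mx (\row_j (if j == i then 0 else d 0 j)))
    + d 0 i * \det (row' i (col' i A) + diag_mx (col' i d)).
Proof.
pose C := \matrix_(r, c) if r == i then (r == c)%:R else (A + diag_mx d) r c.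
rewrite (@determinant_multilinear _ _ _
  (A + diag_mx (\row_j (if j == i then 0 else d 0 j))) C i 1 (d 0 i)); last 3 first.
- apply/rowP => j; rewrite !mxE eqxx /=.
  by case: (i =P j) => [<-|_]; rewrite ?mulr1 ?mulr0 ?mulr1n ?mulr0n ?addr0 ?mul1r.
- by apply/matrixP => r c; rewrite !mxE eq_sym (negbTE (neq_lift _ _)).
- by apply/matrixP => r c; rewrite !mxE eq_sym (negbTE (neq_lift _ _)).
rewrite mul1r; congr (_ + _ * _).
rewrite (expand_det_row _ i) (bigD1 i) //= big1 => [|j nji]; last first.
  by rewrite !mxE eqxx eq_sym (negbTE nji) mul0r.
rewrite addr0 !mxE !eqxx mul1r /cofactor addnn -muln2 exprM sqrr_sign mul1r.
congr (\det _); apply/matrixP => r c.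
by rewrite !mxE eq_sym (negbTE (neq_lift _ _)) (inj_eq lift_inj).
Qed.

Lemma det_add_diag_ge0 m (A : 'M[R]_m) (d : 'rV[R]_m) :
  P0_inj A -> (forall i, 0 <= d 0 i) -> 0 <= \det (A + diag_mx d).
Proof.
elim: m A d => [|m IHm] A d P0A d_ge0; first by rewrite det_mx00.
suff supp_ind : forall k, (k <= m.+1)%N -> forall d : 'rV_m.+1, (forall i, 0 <= d 0 i) ->
    (forall j : 'I_m.+1, (k <= j)%N -> d 0 j = 0) -> 0 <= \det (A + diag_mx d).
  by apply: (supp_ind m.+1) => // j; rewrite leqNgt ltn_ord.
clear d d_ge0; elim=> [_|k IHk lt_k] d d_ge0 d_supp.
  have -> : A + diag_mx d = A.
    by apply/matrixP => r c; rewrite !mxE d_supp // mul0rn addr0.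
  exact: P0_inj_det_ge0.
rewrite (det_add_diag_expand _ _ (Ordinal lt_k)); apply: addr_ge0.
  apply: IHk; first exact: ltnW.
    by move=> j; rewrite mxE; case: eqP.
  move=> j le_kj; rewrite mxE; case: eqP => // /eqP ne_jk.
  by apply: d_supp; rewrite ltn_neqAle le_kj andbT; apply: contraNneq ne_jk => e; apply/eqP/val_inj.
apply: mulr_ge0 => //; apply: IHm; first exact: P0_inj_minor.
by move=> j; rewrite mxE.
Qed.

Lemma det_add_diag_gt0 m (A : 'M[R]_m) (d : 'rV[R]_m) :
  P0_inj A -> (forall i, 0 < d 0 i) -> 0 < \det (A + diag_mx d).
Proof.
elim: m A d => [|m IHm] A d P0A d_gt0; first by rewrite det_mx00.
rewrite (det_add_diag_expand _ _ ord0); apply: ltr_wpDl.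
  by apply: det_add_diag_ge0 => // j; rewrite mxE; case: eqP => // _; apply: ltW.
apply: mulr_gt0 => //; apply: IHm; first exact: P0_inj_minor.
by move=> j; rewrite mxE.
Qed.

Lemma P0_det_add_scalar_gt0 m (A : 'M[R]_m) t :
  P0_matrix A -> 0 < t -> 0 < \det (A + t%:M).
Proof.
move=> P0A t_gt0; rewrite -diag_const_mx.
by apply: det_add_diag_gt0 => [|i]; [apply: P0_matrix_inj | rewrite mxE].
Qed.

End PrincipalMinors.

Lemma P0_eigenvalue_ge0 (R : realFieldType) m (A : 'M[R]_m) a :
  P0_matrix A -> eigenvalue A a -> 0 <= a.
Proof.
move=> P0A /eigenvalueP [v vA v_neq0]; rewrite leNgt; apply/negP => a_lt0.
have : 0 < \det (A + (- a)%:M) by apply: P0_det_add_scalar_gt0; rewrite // oppr_gt0.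
suff /eqP -> : \det (A + (- a)%:M) == 0 by rewrite ltxx.
by apply/det0P; exists v; rewrite // mulmxDr vA mul_mx_scalar scaleNr subrr.
Qed.

Lemma sum_wedge_pairs (K : nmodType) n (F : 'I_n * 'I_n -> K) :
  \sum_(a < wedge_dim n) F (wedge_idx a) =
  \sum_(i < n) \sum_(j < n) (if (i < j)%N then F (i, j) else 0).
Proof.
rewrite /wedge_idx /wedge_dim -(big_tnth _ _ _ xpredT F) /wedge_pairs big_filter.
rewrite big_mkcond big_allpairs big_enum /=.
by apply: eq_bigr => i _; rewrite big_enum.
Qed.

Lemma sum_lt_antisym (K : comPzRingType) n (F G : 'I_n -> 'I_n -> K) :
  (forall i, F i i = 0) -> (forall i j, F j i = - F i j) ->
  \sum_(i < n) \sum_(j < n) (if (i < j)%N then F i j * (G i j - G j i) else 0) =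
  \sum_(i < n) \sum_(j < n) F i j * G i j.
Proof.
move=> F_diag F_anti.
transitivity (\sum_(i < n) \sum_(j < n) (if (i < j)%N then F i j * G i j else 0) +
  \sum_(i < n) \sum_(j < n) (if (i < j)%N then F j i * G j i else 0)).
  rewrite -big_split /=; apply: eq_bigr => i _; rewrite -big_split /=.
  apply: eq_bigr => j _; case: (i < j)%N; last by rewrite addr0.
  by rewrite F_anti; ring.
rewrite [X in _ + X]exchange_big -big_split /=; apply: eq_bigr => i _.
rewrite -big_split /=; apply: eq_bigr => j _.
case: ltngtP => [_|_|/val_inj ->]; rewrite ?addr0 ?add0r //.
by rewrite F_diag mul0r.
Qed.

Section Wedge.
Variables (K : comPzRingType) (n : nat).
Implicit Types (v u : 'rV[K]_n) (M : 'M[K]_n).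

Definition wedge_coef v u (i j : 'I_n) := v 0 i * u 0 j - v 0 j * u 0 i.

Definition wedge2 v u : 'rV[K]_(wedge_dim n) :=
  \row_a wedge_coef v u (wedge_idx a).1 (wedge_idx a).2.

Lemma wedge2Zl c v u : wedge2 (c *: v) u = c *: wedge2 v u.
Proof. by apply/rowP => a; rewrite !mxE /wedge_coef !mxE; ring. Qed.

Lemma wedge2Zr c v u : wedge2 v (c *: u) = c *: wedge2 v u.
Proof. by apply/rowP => a; rewrite !mxE /wedge_coef !mxE; ring. Qed.

Lemma wedge2_mul_compound2 M v u :
  wedge2 v u *m compound2 M = wedge2 (v *m M) u + wedge2 v (u *m M).
Proof.
apply/rowP => b; rewrite !mxE; under eq_bigr do rewrite !mxE.
case: (wedge_idx b) => k l /=.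
pose W := wedge_coef v u.
pose G (i j : 'I_n) := (if l == j then M i k else 0) + (if k == i then M j l else 0).
rewrite (sum_wedge_pairs (fun p => W p.1 p.2 * (let: (i, j) := p in
   (if l == j then M i k else 0) - (if l == i then M j k else 0) +
   (if k == i then M j l else 0) - (if k == j then M i l else 0)))) /=.
transitivity (\sum_(i < n) \sum_(j < n)
    (if (i < j)%N then W i j * (G i j - G j i) else 0)).
  by apply: eq_bigr => i _; apply: eq_bigr => j _; case: (i < j)%N => //; rewrite /G; ring.
rewrite sum_lt_antisym => [|i|i j]; rewrite /W /wedge_coef; try ring.
have sum_delta (F : 'I_n -> K) c : \sum_j (if c == j then F j else 0) = F c.
  by rewrite -big_mkcond (big_pred1 c) // => j; rewrite eq_sym.
rewrite /G; under eq_bigr do (under eq_bigr do rewrite mulrDr !(fun_if (GRing.mul _)) !mulr0).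
rewrite /=; under eq_bigr do rewrite big_split; rewrite big_split /= [X in _ + X]exchange_big /=.
under eq_bigr do rewrite sum_delta.
rewrite [LHS]addrC; under eq_bigr => j _ do rewrite sum_delta.
rewrite -big_split !mxE !mulr_suml !mulr_sumr -!sumrB -big_split /=.
by apply: eq_bigr => i _; ring.
Qed.

Lemma wedge2_eigen M v u x y : v *m M = x *: v -> u *m M = y *: u ->
  wedge2 v u *m compound2 M = (x + y) *: wedge2 v u.
Proof.
by move=> vM uM; rewrite wedge2_mul_compound2 vM uM wedge2Zl wedge2Zr scalerDl.
Qed.

Lemma wedge2_eq0_coef v u : wedge2 v u = 0 -> forall i j, wedge_coef v u i j = 0.
Proof.
move=> vu0; have coef_lt0 (i j : 'I_n) : (i < j)%N -> wedge_coef v u i j = 0.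
  move=> lt_ij; have ij_in : (i, j) \in wedge_pairs n.
    by rewrite mem_filter lt_ij; apply/allpairsP; exists (i, j); rewrite !mem_enum.
  have ij_lt : (index (i, j) (wedge_pairs n) < wedge_dim n)%N by rewrite index_mem.
  have /rowP/(_ (Ordinal ij_lt)) := vu0.
  by rewrite !mxE /wedge_idx (tnth_nth (i, j)) /= nth_index.
move=> i j; case: (ltngtP i j) => [/coef_lt0 //|/coef_lt0|/val_inj ->].
  by move/eqP; rewrite /wedge_coef subr_eq0 => /eqP ->; rewrite subrr.
by rewrite /wedge_coef subrr.
Qed.

End Wedge.

Lemma wedge2_eq0_scale (K : fieldType) n (v u : 'rV[K]_n) :
  wedge2 v u = 0 -> v != 0 -> exists c, u = c *: v.
Proof.
move=> /wedge2_eq0_coef vu0 /rV0Pn [k vk0]; exists (u 0 k / v 0 k).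
apply/rowP => j; rewrite mxE; apply: (mulfI vk0).
by have /eqP := vu0 k j; rewrite /wedge_coef subr_eq0 => /eqP ->; field.
Qed.

Lemma eigenvalue_compound2D (K : fieldType) n (A : 'M[K]_n) x y :
  x != y -> eigenvalue A x -> eigenvalue A y -> eigenvalue (compound2 A) (x + y).
Proof.
move=> neq_xy /eigenvalueP [v vA v_neq0] /eigenvalueP [u uA u_neq0].
apply/eigenvalueP; exists (wedge2 v u); first exact: wedge2_eigen.
apply/eqP => /wedge2_eq0_scale /(_ v_neq0) [c u_eq].
have : (x - y) *: u = 0.
  by rewrite scalerBl -uA {2}u_eq -scalemxAl vA scalerA mulrC -scalerA -u_eq subrr.
by move/eqP; rewrite scaler_eq0 subr_eq0 (negbTE neq_xy) (negbTE u_neq0).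
Qed.

Lemma eigenvalueN (K : fieldType) n (A : 'M[K]_n) a :
  eigenvalue (- A) (- a) = eigenvalue A a.
Proof.
apply/eigenvalueP/eigenvalueP => -[v vA v_neq0]; exists v => //.
  by apply: oppr_inj; rewrite -mulmxN vA scaleNr.
by rewrite mulmxN vA scaleNr.
Qed.

Lemma map_compound2 (R S : pzRingType) (f : {rmorphism R -> S}) n (M : 'M[R]_n) :
  map_mx f (compound2 M) = compound2 (map_mx f M).
Proof.
apply/matrixP => a b; rewrite !mxE.
case: (wedge_idx a) => i j; case: (wedge_idx b) => k l.
by rewrite !(rmorphB, rmorphD) /= !(fun_if f) !rmorph0 ?mxE.
Qed.

Section RealMatrix.
Variables (R : rcfType) (n : nat) (M : 'M[R]_n).

Lemma complex_eigenvalue_conj z : complex_eigenvalue M z -> complex_eigenvalue M z^*%C.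
Proof.
have Mc_conj : map_mx conjc (map_mx (real_complex R) M) = map_mx (real_complex R) M.
  by apply/matrixP => i j; rewrite !mxE conjc_real.
rewrite /complex_eigenvalue => /eigenvalueP [v vM v_neq0]; apply/eigenvalueP.
exists (map_mx conjc v); first by rewrite -[in LHS]Mc_conj -map_mxM vM map_mxZ.
by rewrite map_mx_eq0.
Qed.

Lemma compound2_eigenvalue_Re z : complex_eigenvalue M z -> complex.Im z != 0 ->
  eigenvalue (compound2 M) (2 * complex.Re z).
Proof.
move=> z_eig Im_neq0.
rewrite -(eigenvalue_map (real_complex R)) map_compound2 rmorphM rmorph_nat -addcJ.
apply: (eigenvalue_compound2D _ z_eig (complex_eigenvalue_conj z_eig)).
apply: contra Im_neq0; case: z {z_eig} => a b /= /eqP [] b_eq.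
by apply/eqP; lra.
Qed.

End RealMatrix.

Theorem lemma2p4 (R : rcfType) (n : nat) (M : 'M[R]_n) :
  (2 <= n)%N ->
  (P0_matrix (compound2 M) ->
     forall z : R[i], complex_eigenvalue M z -> complex.Im z != 0 -> ~ (complex.Re z < 0)) /\
  (P0_matrix (- compound2 M) ->
     forall z : R[i], complex_eigenvalue M z -> complex.Im z != 0 -> ~ (0 < complex.Re z)).
Proof.
move=> _; split=> P0 z z_eig Im_neq0; have Re_eig := compound2_eigenvalue_Re z_eig Im_neq0.
  by have := P0_eigenvalue_ge0 P0 Re_eig; move: (complex.Re z) => r; lra.
rewrite -eigenvalueN in Re_eig.
by have := P0_eigenvalue_ge0 P0 Re_eig; move: (complex.Re z) => r; lra.
Qed.
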